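(* A strategy of the chair is regret-free if and only if it never misses an opportunity and never takes a risk.
   Context: Let $\mathcal{X}$ be a finite set of alternatives. A proto-ranking is an irreflexive and transitive binary relation on $\mathcal{X}$; a ranking is a total proto-ranking; a tournament is a total and asymmetric binary relation on $\mathcal{X}$. The chair has a fixed preference $\succ$, a ranking on $\mathcal{X}$. Interaction: given a tournament $\mathrel{W}$, set $R_0=\varnothing$. In each period $t\geq1$ in which $R_{t-1}$ is not total, the chair offers a pair $\{x,y\}$ of distinct alternatives unranked by $R_{t-1}$; the winner is $x$ if $x\mathrel{W}y$ and $y$ otherwise, and $R_t$ is the transitive closure of $R_{t-1}\cup\{(\text{winner},\text{loser})\}$, stopping when $R_t$ is total. A history is a finite sequence of (winner, loser) pairs that can arise this way; terminal if its induced proto-ranking is total. A strategy assigns to each non-terminal history a pair unranked at that history. The outcome of $\sigma$ under $\mathrel{W}$ is the final ranking. A non-terminal history is on the path of $\sigma$ if it is generated by $\sigma$ and some tournament. A ranking is $\mathrel{W}$-feasible if it is the outcome under $\mathrel{W}$ of some strategy. $R$ is more aligned with $\succ$ than $R'$ if for all $x\succ y$, $xR'y$ implies $xRy$. A ranking is $\mathrel{W}$-unimprovable if no other $\mathrel{W}$-feasible ranking is more aligned with $\succ$. A strategy is regret-free if for every tournament $\mathrel{W}$ its outcome under $\mathrel{W}$ is $\mathrel{W}$-unimprovable. Errors: let $R$ be a non-total proto-ranking and $x\succ y$ alternatives unranked by $R$. Offering $\{x,y\}$ misses an opportunity at $R$ if there is $z$ with $x\succ z\succ y$ and neither $yRz$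 nor $zRx$. Offering $\{x,y\}$ takes a risk at $R$ if there is $z$ with either (a) $z\succ y$, $xRz$ and not $yRz$, or (b) $x\succ z$, $zRy$ and not $zRx$. A strategy never misses an opportunity (never takes a risk) if at no history on its path does the pair it offers miss an opportunity (take a risk) at the current proto-ranking. *)

From mathcomp Require Import all_boot.
Set Implicit Arguments. Unset Strict Implicit. Unset Printing Implicit Defensive.

Section Chair.
Variable X : finType.

Definition irreflexive_rel (R : rel X) := forall x, ~~ R x x.
Definition transitive_rel (R : rel X) := forall x y z, R x y -> R y z -> R x z.
Definition total_rel (R : rel X) := forall x y, x != y -> R x y || R y x.
Definition asymmetric_rel (R : rel X) := forall x y, R x y -> ~~ R y x.

Definition proto_ranking (R : rel X) := irreflexive_rel R /\ transitive_rel R.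
Definition ranking (R : rel X) := proto_ranking R /\ total_rel R.
Definition tournament (W : rel X) := total_rel W /\ asymmetric_rel W.

Definition totalb (R : rel X) : bool :=
  [forall x, forall y, (x != y) ==> (R x y || R y x)].

Definition unranked (R : rel X) (x y : X) : bool :=
  [&& x != y, ~~ R x y & ~~ R y x].

Definition tclos (e : rel X) : rel X :=
  fun x y => [exists z, e x z && connect e z y].

(* a history is a sequence of (winner, loser) pairs *)
Definition history := seq (X * X).

Definition add_pair (R : rel X) (p : X * X) : rel X :=
  tclos (fun x y => R x y || ((x == p.1) && (y == p.2))).

Definition histrel (h : history) : rel X :=
  foldl add_pair (fun _ _ => false) h.

Definition terminal (h : history) : bool := totalb (histrel h).

Definition winloss (W : rel X) (p : X * X) : X * X :=
  if W p.1 p.2 then p else (p.2, p.1).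

Definition valid_history (h : history) : Prop :=
  exists W, tournament W /\
    forall h1 p h2, h = h1 ++ p :: h2 ->
      [/\ ~~ terminal h1, unranked (histrel h1) p.1 p.2 & W p.1 p.2].

(* strategies: functions on histories, required to offer an unranked pair at
   every non-terminal history (values elsewhere are irrelevant) *)
Definition is_strategy (sigma : history -> X * X) : Prop :=
  forall h, valid_history h -> ~~ terminal h ->
    unranked (histrel h) (sigma h).1 (sigma h).2.

Fixpoint play (sigma : history -> X * X) (W : rel X) (n : nat) : history :=
  match n with
  | 0 => [::]
  | n'.+1 => let h := play sigma W n' in
             if terminal h then h else rcons h (winloss W (sigma h))
  end.

(* each period ranks a new pair, so #|X| * #|X| periods suffice to terminate *)
Definition outcome (sigma : history -> X * X) (W : rel X) : rel X :=
  histrel (play sigma W (#|X| * #|X|)).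

Definition feasible (W : rel X) (R : rel X) : Prop :=
  exists sigma, is_strategy sigma /\ outcome sigma W =2 R.

Definition more_aligned (pref : rel X) (R R' : rel X) : Prop :=
  forall x y, pref x y -> R' x y -> R x y.

Definition unimprovable (pref W : rel X) (R : rel X) : Prop :=
  forall R', feasible W R' -> ranking R' -> more_aligned pref R' R -> R' =2 R.

Definition regret_free (pref : rel X) (sigma : history -> X * X) : Prop :=
  forall W, tournament W -> unimprovable pref W (outcome sigma W).

Definition orient (pref : rel X) (p : X * X) : X * X :=
  if pref p.1 p.2 then p else (p.2, p.1).

Definition misses_opportunity (pref R : rel X) (p : X * X) : Prop :=
  let x := (orient pref p).1 in let y := (orient pref p).2 in
  exists z, [&& pref x z, pref z y, ~~ R y z & ~~ R z x].

Definition takes_risk (pref R : rel X) (p : X * X) : Prop :=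
  let x := (orient pref p).1 in let y := (orient pref p).2 in
  exists z, [&& pref z y, R x z & ~~ R y z] || [&& pref x z, R z y & ~~ R z x].

Definition on_path (sigma : history -> X * X) (h : history) : Prop :=
  ~~ terminal h /\ exists W, tournament W /\ exists n, play sigma W n = h.

Definition never_misses (pref : rel X) (sigma : history -> X * X) : Prop :=
  forall h, on_path sigma h -> ~ misses_opportunity pref (histrel h) (sigma h).

Definition never_risks (pref : rel X) (sigma : history -> X * X) : Prop :=
  forall h, on_path sigma h -> ~ takes_risk pref (histrel h) (sigma h).

End Chair.

From Pilot Require Import Defs.
From mathcomp Require Import all_boot.
Set Implicit Arguments. Unset Strict Implicit. Unset Printing Implicit Defensive.

(** A proto-ranking R has a natural completion: R on ranked pairs and the chair's
    preference on unranked ones.  Offering x ≻ y at R is an error exactly when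
    some z lies strictly between x and y in this completion.  Without errors
    the completion stays a ranking along every play and the outcome departs
    from ≻ only on pairs the tournament decided directly; a feasible ranking
    more aligned than the outcome then contains every pair the tournament
    decides in the play producing it, so it is the outcome.  Conversely, at the
    first error the tournament that follows the completion C except that y
    beats x reproduces the play so far and ends with y above x, whereas C is
    feasible (z separates x from y, so all adjacent pairs of C are won as in C)
    and more aligned than that outcome. *)

Section Chair.
Variable X : finType.
Implicit Types (R T W e : rel X) (h : history X) (p : X * X).
Local Notation add_pair := Pilot.Defs.add_pair.

(** * Transitive closure and histories *)

Lemma tclos_base e a b : e a b -> tclos e a b.
Proof. by move=> eab; apply/existsP; exists b; rewrite eab connect0. Qed.

Lemma tclos_trans e : transitive_rel (tclos e).
Proof.
move=> a b c /existsP [z1 /andP [e1 c1]] /existsP [z2 /andP [e2 c2]].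
apply/existsP; exists z1; rewrite e1 /=.
by apply: connect_trans c1 _; apply: connect_trans (connect1 e2) c2.
Qed.

Lemma tclos_min e T : (forall a b, e a b -> T a b) -> transitive_rel T ->
  forall a b, tclos e a b -> T a b.
Proof.
move=> eT Ttr a b /existsP [z /andP [eaz /connectP [s pth ->]]].
have : T a z := eT _ _ eaz.
elim: s z pth {eaz} => [|c s IH] z //= /andP [ezc pth] Taz.
exact: IH pth (Ttr _ _ _ Taz (eT _ _ ezc)).
Qed.

Lemma add_pair_base R p a b : R a b -> add_pair R p a b.
Proof. by move=> Rab; apply: tclos_base; rewrite /= Rab. Qed.

Lemma add_pair_new R p : add_pair R p p.1 p.2.
Proof. by apply: tclos_base; rewrite /= !eqxx orbT. Qed.

Lemma add_pair_trans R p : transitive_rel (add_pair R p).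
Proof. exact: tclos_trans. Qed.

Lemma add_pair_min R p T : transitive_rel T -> (forall a b, R a b -> T a b) ->
  T p.1 p.2 -> forall a b, add_pair R p a b -> T a b.
Proof.
by move=> Ttr RT Tp; apply: tclos_min => // a b /orP [/RT //|/andP [/eqP -> /eqP ->]].
Qed.

Definition reflc R a b := (a == b) || R a b.

Lemma add_pairE R w l : transitive_rel R -> forall a b,
  add_pair R (w, l) a b = R a b || (reflc R a w && reflc R l b).
Proof.
move=> Rtr a b; apply/idP/idP; last first.
  case/orP => [/add_pair_base //|/andP [/orP [/eqP ->|Raw] /orP [/eqP <-|Rlb]]].
  - exact: add_pair_new (w, l).
  - exact: add_pair_trans (add_pair_new R (w, l)) (add_pair_base _ Rlb).
  - exact: add_pair_trans (add_pair_base _ Raw) (add_pair_new R (w, l)).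
  - apply: add_pair_trans (add_pair_base _ Rlb).
    exact: add_pair_trans (add_pair_base _ Raw) (add_pair_new R (w, l)).
apply: (add_pair_min (T := fun u v => R u v || (reflc R u w && reflc R l v)))
  => [u v t /=|u v /= ->//|]; last by rewrite /= /reflc !eqxx orbT.
  case/orP => [Ruv|/andP [Huw Hlv]] /orP [Rvt|/andP [Hvw Hlt]].
  - by rewrite (Rtr _ _ _ Ruv Rvt).
  - apply/orP; right; rewrite Hlt andbT /reflc.
    by case/orP: Hvw => [/eqP <-|/(Rtr _ _ _ Ruv) ->]; rewrite ?Ruv orbT.
  - apply/orP; right; rewrite Huw /= /reflc.
    by case/orP: Hlv => [/eqP ->|/Rtr /(_ Rvt) ->]; rewrite ?Rvt orbT.
  - by rewrite Huw Hlt orbT.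
Qed.

Lemma unranked_sym R a b : unranked R a b = unranked R b a.
Proof. by rewrite /unranked eq_sym [~~ R a b && _]andbC. Qed.

Lemma add_pair_irr R w l : proto_ranking R -> unranked R w l ->
  irreflexive_rel (add_pair R (w, l)).
Proof.
move=> [Rirr Rtr] /and3P [wl nRwl nRlw] a; rewrite add_pairE // (negbTE (Rirr a)) /=.
apply/negP => /andP [/orP [/eqP Eaw|Raw] /orP [/eqP Ela|Rla]].
- by move: wl; rewrite -Eaw Ela eqxx.
- by move: nRlw; rewrite -Eaw Rla.
- by move: nRlw; rewrite Ela Raw.
- by move: nRlw; rewrite (Rtr _ _ _ Rla Raw).
Qed.

Lemma histrel_rcons h p : histrel (rcons h p) = add_pair (histrel h) p.
Proof. by rewrite /histrel foldl_rcons. Qed.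

Lemma histrel_trans h : transitive_rel (histrel h).
Proof. by case/lastP: h => [|h p] //; rewrite histrel_rcons; apply: add_pair_trans. Qed.

Lemma histrel_mem h p : p \in h -> histrel h p.1 p.2.
Proof.
elim/last_ind: h => [|h q IH] //; rewrite mem_rcons inE histrel_rcons.
by case/orP => [/eqP ->|/IH]; [apply: add_pair_new | apply: add_pair_base].
Qed.

Lemma histrel_min h T : transitive_rel T -> (forall p, p \in h -> T p.1 p.2) ->
  forall a b, histrel h a b -> T a b.
Proof.
move=> Ttr; elim/last_ind: h => [|h p IH] hT //; rewrite histrel_rcons.
apply: add_pair_min => //; last by apply: hT; rewrite mem_rcons mem_head.
by apply: IH => q qh; apply: hT; rewrite mem_rcons inE qh orbT.
Qed.

Lemma rcons_eq_cat h q h1 p h2 : rcons h q = h1 ++ p :: h2 ->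
  (h1 = h /\ p = q) \/ exists h2', h = h1 ++ p :: h2'.
Proof.
case/lastP: h2 => [|h2 r]; first by rewrite cats1 => /rcons_inj [-> ->]; left.
by rewrite -rcons_cons -rcons_cat => /rcons_inj [-> _]; right; exists h2.
Qed.

Lemma valid_history_proto h : valid_history h -> proto_ranking (histrel h).
Proof.
case=> W [_]; elim/last_ind: h => [|h p IH] steps; first by [].
have [_ Up _] := steps h p [::] (esym (cats1 h p)).
have Rh : proto_ranking (histrel h).
  apply: IH => h1 q h2 E; apply: steps.
  by rewrite E -cats1 -catA.
rewrite histrel_rcons; split; last exact: add_pair_trans.
by move: Up; clear steps IH; case: p => w l; apply: add_pair_irr.
Qed.

(** * Rankings and re-deciding a pair *)

Lemma ranking_irr T a : ranking T -> ~~ T a a.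
Proof. by case=> [[]]. Qed.

Lemma ranking_trans T : ranking T -> transitive_rel T.
Proof. by case=> [[]]. Qed.

Lemma ranking_total T a b : ranking T -> a != b -> T a b || T b a.
Proof. by case=> _; apply. Qed.

Lemma ranking_neq T a b : ranking T -> T a b -> a != b.
Proof. by move=> HT; apply: contraTneq => ->; apply: ranking_irr. Qed.

Lemma ranking_asym T : ranking T -> asymmetric_rel T.
Proof.
move=> HT a b Tab; apply/negP => Tba.
by move: (ranking_irr a HT); rewrite (ranking_trans HT Tab Tba).
Qed.

Lemma ranking_tournament T : ranking T -> tournament T.
Proof. by move=> HT; split; [case: HT | apply: ranking_asym]. Qed.

Lemma ranking_sub_eq R T : ranking R -> ranking T ->
  (forall a b, R a b -> T a b) -> R =2 T.
Proof.
move=> HR HT RT a b; apply/idP/idP => [/RT //|Tab].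
case/orP: (ranking_total HR (ranking_neq HT Tab)) => // /RT Tba.
by move: (ranking_asym HT Tab); rewrite Tba.
Qed.

Definition same_pair (x y a b : X) := ((a == x) && (b == y)) || ((a == y) && (b == x)).

Lemma same_pairP x y a b :
  reflect ((a = x /\ b = y) \/ (a = y /\ b = x)) (same_pair x y a b).
Proof.
apply: (iffP orP) => [[] /andP [/eqP -> /eqP ->]|[[-> ->]|[-> ->]]];
  by rewrite ?eqxx; auto.
Qed.

Lemma same_pairC x y a b : same_pair x y a b = same_pair x y b a.
Proof. by rewrite /same_pair orbC andbC [(b == y) && _]andbC. Qed.

Lemma unranked_same_pair R w l a b : unranked R w l -> R a b -> ~~ same_pair w l a b.
Proof.
move=> /and3P [_ nRwl nRlw] Rab; apply/negP => /same_pairP [[Ea Eb]|[Ea Eb]].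
  by move: nRwl; rewrite -Ea -Eb Rab.
by move: nRlw; rewrite -Ea -Eb Rab.
Qed.

Definition override T (w l : X) : rel X :=
  fun a b => if same_pair w l a b then (a == w) && (b == l) else T a b.

Lemma override_off T w l a b : ~~ same_pair w l a b -> override T w l a b = T a b.
Proof. by rewrite /override => /negbTE ->. Qed.

Lemma override_win T w l : override T w l w l.
Proof. by rewrite /override /same_pair !eqxx. Qed.

Lemma override_lose T w l : w != l -> ~~ override T w l l w.
Proof. by move=> wl; rewrite /override /same_pair !eqxx orbT eq_sym (negbTE wl). Qed.

Lemma override_tournament T w l : tournament T -> w != l -> tournament (override T w l).
Proof.
move=> [Ttot Tasym] wl; split=> a b.
  case: (boolP (same_pair w l a b)) => [/same_pairP [[-> ->]|[-> ->]] _|off ab].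
  - by rewrite override_win.
  - by rewrite override_win orbT.
  have off' : ~~ same_pair w l b a by rewrite -same_pairC.
  by rewrite !override_off // Ttot.
case: (boolP (same_pair w l a b)) => [/same_pairP [[-> ->]|[-> ->]]|off].
- by rewrite override_lose.
- by rewrite (negbTE (override_lose T wl)).
have off' : ~~ same_pair w l b a by rewrite -same_pairC.
by rewrite !override_off //; apply: Tasym.
Qed.

Lemma override_ranking T w l : ranking T -> w != l ->
  (forall z, ~~ (T l z && T z w)) -> ranking (override T w l).
Proof.
move=> HT wl adj.
have [Otot Oasym] := override_tournament (ranking_tournament HT) wl.
have Ochar a b : override T w l a b ->
    (a = w /\ b = l) \/ (~~ same_pair w l a b /\ T a b).
  by rewrite /override; case: ifP => [_ /andP [/eqP -> /eqP ->]|/negbT]; auto.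
have lw : same_pair w l l w by apply/same_pairP; right.
split; [split=> [a|a b c] | by []].
  by apply/negP => Oaa; move: (Oasym _ _ Oaa); rewrite Oaa.
case/Ochar => [[-> ->]|[ab Tab]] /Ochar [[Ebw ->]|[bc Tbc]].
- by rewrite Ebw eqxx in wl.
- have cw : c != w by apply: contraNneq bc => ->.
  rewrite override_off; last first.
    by rewrite /same_pair eqxx (negbTE wl) /= orbF eq_sym (ranking_neq HT Tbc).
  case/orP: (ranking_total HT cw) => // Tcw.
  by move: (adj c); rewrite Tbc Tcw.
- rewrite {}Ebw in ab Tab.
  have al : a != l by apply: contraNneq ab => ->.
  rewrite override_off; last first.
    rewrite /same_pair eqxx andbT [l == w]eq_sym (negbTE wl) andbF orbF.
    exact: ranking_neq HT Tab.
  case/orP: (ranking_total HT al) => // Tla.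
  by move: (adj a); rewrite Tla Tab.
- case: (boolP (same_pair w l a c)) => [/same_pairP [[-> ->]|[Eal Ecw]]|ac].
  + exact: override_win.
  + by move: (adj b); rewrite -Eal -Ecw Tab Tbc.
  + by rewrite override_off // (ranking_trans HT Tab Tbc).
Qed.

(** * The interaction *)

Lemma winloss_W W p : tournament W -> p.1 != p.2 -> W (winloss W p).1 (winloss W p).2.
Proof.
case=> Wtot _ d; rewrite /winloss; case: ifP => //= nW.
by move: (Wtot _ _ d); rewrite nW.
Qed.

Lemma winloss_unranked W R p : unranked R p.1 p.2 ->
  unranked R (winloss W p).1 (winloss W p).2.
Proof. by rewrite /winloss; case: ifP => //= _; rewrite unranked_sym. Qed.

Lemma winloss_eq W W' p : asymmetric_rel W' ->
  W' (winloss W p).1 (winloss W p).2 -> winloss W' p = winloss W p.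
Proof.
rewrite /winloss => W'asym; case: ifP => _ /= W'p; first by rewrite W'p.
by rewrite (negbTE (W'asym _ _ W'p)).
Qed.

Section Play.
Variables (sigma : history X -> X * X) (W : rel X).
Local Notation play := (play sigma W).

Lemma playS n : play n.+1 =
  if terminal (play n) then play n else rcons (play n) (winloss W (sigma (play n))).
Proof. by []. Qed.

Lemma play_last n : ~~ terminal (play n) ->
  play n.+1 = rcons (play n) (winloss W (sigma (play n))).
Proof. by rewrite playS => /negbTE ->. Qed.

Lemma play_stuck m n : terminal (play m) -> m <= n -> play n = play m.
Proof.
move=> tm; elim: n => [|n IH]; first by rewrite leqn0 => /eqP ->.
by rewrite leq_eqVlt ltnS => /orP [/eqP -> //|/IH E]; rewrite playS E tm.
Qed.

Lemma play_mono m n : m <= n ->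
  forall a b, histrel (play m) a b -> histrel (play n) a b.
Proof.
elim: n => [|n IH]; first by rewrite leqn0 => /eqP ->.
rewrite leq_eqVlt ltnS => /orP [/eqP -> //|/IH sub] a b /sub.
by rewrite playS; case: ifP => // _; rewrite histrel_rcons; apply: add_pair_base.
Qed.

Lemma play_eq_upto W' n : asymmetric_rel W' ->
  (forall a b, histrel (play n) a b -> W' a b) ->
  forall k, k <= n -> Pilot.Defs.play sigma W' k = play k.
Proof.
move=> W'asym sub; elim=> [|k IH] // kn; rewrite /= IH ?(ltnW kn) //.
case: ifP => // nt; congr rcons; apply: winloss_eq => //; apply: sub.
by apply: (play_mono kn); rewrite play_last ?nt // histrel_rcons add_pair_new.
Qed.

Hypotheses (Hs : is_strategy sigma) (HW : tournament W).

Lemma play_steps n h1 p h2 : play n = h1 ++ p :: h2 ->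
  [/\ ~~ terminal h1, unranked (histrel h1) p.1 p.2 & W p.1 p.2].
Proof.
elim: n h1 p h2 => [|n IH] h1 p h2; first by case: h1.
rewrite playS; case: ifP => nt; first exact: IH.
case/rcons_eq_cat => [[-> ->]|[h2' /IH //]].
have U : unranked (histrel (play n)) (sigma (play n)).1 (sigma (play n)).2.
  by apply: Hs; rewrite ?nt //; exists W; split => // ? ? ?; apply: IH.
split; [by rewrite nt | exact: winloss_unranked | apply: winloss_W => //].
by case/and3P: U.
Qed.

Lemma play_valid n : valid_history (play n).
Proof. by exists W; split => // ? ? ?; apply: play_steps. Qed.

Lemma play_proto n : proto_ranking (histrel (play n)).
Proof. exact: valid_history_proto (play_valid n). Qed.

Lemma play_unranked n : ~~ terminal (play n) ->
  unranked (histrel (play n)) (sigma (play n)).1 (sigma (play n)).2.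
Proof. exact: Hs (play_valid n). Qed.

Lemma play_edge n p : p \in play n -> W p.1 p.2.
Proof.
by move=> pn; have := @play_steps n; case/splitPr: pn => h1 h2 /(_ h1 p h2 erefl) [].
Qed.

Lemma play_count n :
  terminal (play n) || (n <= #|[set q : X * X | histrel (play n) q.1 q.2]|).
Proof.
elim: n => [|n IH]; first by rewrite orbT.
rewrite playS; case: ifP => nt; first by rewrite nt.
rewrite nt /= in IH; apply/orP; right.
apply: leq_ltn_trans IH _; apply: proper_card; rewrite properE histrel_rcons.
apply/andP; split; first by apply/subsetP => q; rewrite !inE; apply: add_pair_base.
apply/subsetPn; exists (winloss W (sigma (play n))); first by rewrite inE add_pair_new.
by rewrite inE; case/and3P: (winloss_unranked W (play_unranked (negbT nt))).
Qed.

Lemma play_terminal : terminal (play (#|X| * #|X|)).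
Proof.
have /orP [//|big] := play_count (#|X| * #|X|).
have full : [set q : X * X | histrel (play (#|X| * #|X|)) q.1 q.2] = setT.
  by apply/eqP; rewrite eqEcard subsetT cardsT card_prod.
apply/forallP => a; apply/forallP => b; apply/implyP => _.
by have := in_setT (a, b); rewrite -full inE => ->.
Qed.

Lemma outcome_ranking : ranking (outcome sigma W).
Proof.
split; first exact: play_proto.
by move=> a b; move/forallP: play_terminal => /(_ a) /forallP /(_ b) /implyP.
Qed.

Lemma play_sub_outcome n : ~~ terminal (play n) ->
  forall a b, histrel (play n.+1) a b -> outcome sigma W a b.
Proof.
move=> nt; apply: play_mono; rewrite ltnNge; apply: contra nt => Nn.
by rewrite (play_stuck play_terminal Nn) play_terminal.
Qed.

End Play.

(** * Feasible rankings *)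

Definition interval T a b := [set c | T a c && T c b].

Lemma interval_split T a b c : ranking T -> T a c -> T c b ->
  #|interval T a c| < #|interval T a b| /\ #|interval T c b| < #|interval T a b|.
Proof.
move=> HT Tac Tcb; have Ttr := ranking_trans HT.
have cab : c \in interval T a b by rewrite inE Tac Tcb.
split; apply: proper_card; rewrite properE; apply/andP; split.
- by apply/subsetP => d; rewrite !inE => /andP [-> /Ttr /(_ Tcb)].
- by apply/subsetPn; exists c; rewrite // inE (negbTE (ranking_irr c HT)) andbF.
- by apply/subsetP => d; rewrite !inE => /andP [/(Ttr _ _ _ Tac) -> ->].
- by apply/subsetPn; exists c; rewrite // inE (negbTE (ranking_irr c HT)).
Qed.

Lemma exists_unranked_cover R T : (forall a b, R a b -> T a b) -> transitive_rel R ->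
  ranking T -> ~~ totalb R ->
  exists a b, [/\ unranked R a b, T a b & forall c, ~~ (T a c && T c b)].
Proof.
move=> RT Rtr HT ntot.
pose P n := [exists a, exists b, [&& unranked R a b, T a b & #|interval T a b| == n]].
have P_of a b : unranked R a b -> T a b -> P #|interval T a b|.
  by move=> U Tab; apply/existsP; exists a; apply/existsP; exists b; rewrite U Tab eqxx.
have exP : exists n, P n.
  move: ntot; rewrite negb_forall => /existsP [a]; rewrite negb_forall => /existsP [b].
  rewrite negb_imply negb_or => /and3P [ab nRab nRba].
  have U : unranked R a b by rewrite /unranked ab nRab nRba.
  case/orP: (ranking_total HT ab) => Tab; eexists; apply: P_of Tab => //.
  by rewrite unranked_sym.
(* An unranked pair with the fewest elements between its ends has none: the
   two halves of a split interval are smaller, hence ranked, and transitivity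
   would rank the pair. *)
case: (ex_minnP exP) => m /existsP [a /existsP [b /and3P [U Tab /eqP Em]]] minm.
have ranked u v : T u v -> #|interval T u v| < m -> R u v.
  move=> Tuv small; case Uuv: (unranked R u v).
    by move: (minm _ (P_of _ _ Uuv Tuv)); rewrite leqNgt small.
  move: Uuv; rewrite /unranked (ranking_neq HT Tuv) /=; case: (R u v) => //=.
  by move/negbFE/RT => Tvu; move: (ranking_asym HT Tuv); rewrite Tvu.
exists a, b; split=> // c; apply/negP => /andP [Tac Tcb].
have [ac cb] := interval_split HT Tac Tcb; rewrite Em in ac cb.
by move: U; rewrite /unranked (Rtr _ _ _ (ranked _ _ Tac ac) (ranked _ _ Tcb cb)) andbF.
Qed.

Lemma feasible_of_covers (s0 : history X -> X * X) W T :
  is_strategy s0 -> tournament W -> ranking T ->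
  (forall a b, T a b -> (forall c, ~~ (T a c && T c b)) -> W a b) -> feasible W T.
Proof.
move=> Hs0 HW HT Tcov.
(* Offer an unranked pair that W decides as T does; one exists as long as the
   play stays inside T. *)
pose s h := odflt (s0 h)
  [pick q : X * X | [&& unranked (histrel h) q.1 q.2, T q.1 q.2 & W q.1 q.2]].
have Hs : is_strategy s.
  by move=> h vh nt; rewrite /s; case: pickP => [q /and3P [] //|_]; apply: Hs0.
have sub n a b : histrel (play s W n) a b -> T a b.
  elim: n a b => [|n IH] //; rewrite playS; case: ifP => nt; first exact: IH.
  have [a [b [U Tab cov]]] :=
    exists_unranked_cover IH (@histrel_trans (play s W n)) HT (negbT nt).
  rewrite histrel_rcons {2}/s.
  case: pickP => [q /and3P [_ Tq Wq]|/(_ (a, b))]; last by rewrite /= U Tab Tcov.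
  by rewrite /winloss Wq; apply: add_pair_min => //; apply: ranking_trans.
by exists s; split => //; apply: ranking_sub_eq (outcome_ranking Hs HW) HT (sub _).
Qed.

(** * Completion by the chair's preference *)

Section Preference.
Variable pref : rel X.
Hypothesis Hp : ranking pref.

Definition completion R a b := R a b || (unranked R a b && pref a b).

Definition completable R := transitive_rel (completion R).

Definition erroneous R p := misses_opportunity pref R p \/ takes_risk pref R p.

Definition reversals_won W R := forall a b, pref a b -> R b a -> W b a.

Lemma completion_base R a b : R a b -> completion R a b.
Proof. by rewrite /completion => ->. Qed.

Lemma completion_rev R a b : pref a b -> completion R b a -> R b a.
Proof.
move=> pab /orP [//|/andP [_ pba]].
by move: (ranking_asym Hp pab); rewrite pba.
Qed.

Lemma completion_ranking R : proto_ranking R -> completable R -> ranking (completion R).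
Proof.
move=> [Rirr _] K; split; first split => // a.
  by rewrite /completion /unranked eqxx (negbTE (Rirr a)).
move=> a b ab; rewrite /completion /unranked ab eq_sym ab /=.
by case: (R a b); case: (R b a) => //=; apply: ranking_total.
Qed.

Lemma completable0 : completable (fun _ _ => false).
Proof.
move=> a b c; rewrite /completion /unranked /= !andbT => /andP [_ pab] /andP [_ pbc].
have pac := ranking_trans Hp pab pbc.
by rewrite pac (ranking_neq Hp pac).
Qed.

Lemma completion_eq R T : ranking T -> (forall a b, R a b -> T a b) ->
  (forall a b, unranked R a b -> T a b -> pref a b) -> completion R =2 T.
Proof.
move=> HT RT Tpref a b; apply/idP/idP.
  case/orP => [/RT //|/andP [U pab]].
  have ab : a != b by case/and3P: U.
  case/orP: (ranking_total HT ab) => // Tba.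
  by move: (ranking_asym Hp pab); rewrite (Tpref b a _ Tba) // unranked_sym.
move=> Tab; rewrite /completion; case Rab: (R a b) => //=.
case Rba: (R b a); first by move: (ranking_asym HT Tab); rewrite RT.
have U : unranked R a b by rewrite /unranked (ranking_neq HT Tab) Rab Rba.
by rewrite U (Tpref _ _ U Tab).
Qed.

Lemma completion_more_aligned R O : ranking O -> (forall a b, R a b -> O a b) ->
  more_aligned pref (completion R) O.
Proof.
move=> HO RO a b pab Oab.
rewrite /completion /unranked (ranking_neq Hp pab) pab andbT /=.
case: (R a b) => //=; apply/negP => /RO Oba.
by move: (ranking_asym HO Oab); rewrite Oba.
Qed.

Lemma orient_pref p : p.1 != p.2 -> pref (orient pref p).1 (orient pref p).2.
Proof.
move=> d; rewrite /orient; case: ifP => //= npref.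
by move: (ranking_total Hp d); rewrite npref.
Qed.

Lemma orient_unranked R p : unranked R p.1 p.2 ->
  unranked R (orient pref p).1 (orient pref p).2.
Proof. by rewrite /orient; case: ifP => //= _; rewrite unranked_sym. Qed.

Lemma winloss_orient W p : winloss W p = orient pref p \/
  winloss W p = ((orient pref p).2, (orient pref p).1).
Proof. by case: p => a b; rewrite /winloss /orient; do 2 case: ifP => _; auto. Qed.

Lemma erroneous_between R p : erroneous R p ->
  exists z, completion R (orient pref p).1 z && completion R z (orient pref p).2.
Proof.
rewrite /erroneous /misses_opportunity /takes_risk; case: (orient pref p) => x y /=.
have C_of u v : pref u v -> ~~ R v u -> completion R u v.
  move=> puv nRvu; rewrite /completion /unranked puv nRvu (ranking_neq Hp puv) andbT.
  by case: (R u v).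
case=> [[z /and4P [pxz pzy nRyz nRzx]]
      |[z /orP [/and3P [pzy Rxz nRyz]|/and3P [pxz Rzy nRzx]]]];
  by exists z; apply/andP; split; first [exact: completion_base | exact: C_of].
Qed.

Lemma between_erroneous R p z : transitive_rel R ->
  unranked R (orient pref p).1 (orient pref p).2 ->
  completion R (orient pref p).1 z -> completion R z (orient pref p).2 -> erroneous R p.
Proof.
rewrite /erroneous /misses_opportunity /takes_risk.
case: (orient pref p) => x y /= Rtr Uxy.
rewrite /completion => /orP [Rxz|/andP [Uxz pxz]] /orP [Rzy|/andP [Uzy pzy]].
- by move: Uxy; rewrite /unranked (Rtr _ _ _ Rxz Rzy) andbF.
- right; exists z; apply/orP; left.
  by move: Uzy; rewrite /unranked pzy Rxz => /and3P [_ _ ->].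
- right; exists z; apply/orP; right.
  by move: Uxz; rewrite /unranked pxz Rzy => /and3P [_ _ ->].
- left; exists z; rewrite pxz pzy.
  by move: Uxz Uzy => /and3P [_ _ ->] /and3P [_ _ ->].
Qed.

Lemma completable_add_pair R w l : proto_ranking R -> completable R -> unranked R w l ->
  (forall z, ~~ (completion R l z && completion R z w)) ->
  completable (add_pair R (w, l)) /\
  forall a b, pref a b -> add_pair R (w, l) b a -> R b a \/ (b = w /\ a = l).
Proof.
move=> HR K Uwl adj; have wl : w != l by case/and3P: Uwl.
have HC := completion_ranking HR K.
(* The completion after adding (w, l) is that of R with {w, l} re-decided in
   favour of w, a ranking since nothing lies between l and w. *)
have HO := override_ranking HC wl adj.
set R' := add_pair R (w, l).
have R'wl : R' w l := add_pair_new R (w, l).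
have R'O : forall a b, R' a b -> override (completion R) w l a b.
  apply: add_pair_min; [exact: ranking_trans HO | | exact: override_win].
  move=> a b Rab; rewrite override_off ?(unranked_same_pair Uwl Rab) //.
  exact: completion_base.
have E : completion R' =2 override (completion R) w l.
  apply: completion_eq => // a b /and3P [ab nR'ab nR'ba].
  have nRab : ~~ R a b by apply: contra nR'ab; apply: add_pair_base.
  have off : ~~ same_pair w l a b.
    by apply/negP => /same_pairP [[Ea Eb]|[Ea Eb]]; rewrite Ea Eb R'wl in nR'ab nR'ba.
  by rewrite override_off // /completion (negbTE nRab) /= => /andP [].
split=> [a b c|a b pab /R'O Oba]; first by rewrite !E; exact: (ranking_trans HO).
case: (boolP (same_pair w l b a)) => [/same_pairP [[-> ->]|[Ebl Eaw]]|off].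
- by right.
- by rewrite Ebl Eaw (negbTE (override_lose _ wl)) in Oba.
- by left; apply: completion_rev pab _; rewrite -(override_off _ off).
Qed.

Lemma unimprovable_of_reversals_won W O : tournament W -> ranking O ->
  reversals_won W O -> unimprovable pref W O.
Proof.
move=> HW HO Orev R' [s [Hs E]] HR' al.
apply: ranking_sub_eq => // a b; rewrite -E.
apply: histrel_min => [|q qh]; first exact: ranking_trans HO.
have Wq := play_edge Hs HW qh.
have R'q : R' q.1 q.2 by rewrite -E; apply: histrel_mem.
have d := ranking_neq HR' R'q.
case/orP: (ranking_total HO d) => // Oqq.
case/orP: (ranking_total Hp d) => pq.
  by move: (HW.2 _ _ Wq); rewrite (Orev _ _ pq Oqq).
by move: (ranking_asym HR' R'q); rewrite (al _ _ pq Oqq).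
Qed.

(** * Errors and regret *)

Section Strategy.
Variable sigma : history X -> X * X.
Hypothesis Hs : is_strategy sigma.

Definition sound_upto W n := forall k, k < n -> ~~ terminal (play sigma W k) ->
  ~ erroneous (histrel (play sigma W k)) (sigma (play sigma W k)).

Lemma play_step W n : tournament W ->
  completable (histrel (play sigma W n)) -> ~~ terminal (play sigma W n) ->
  ~ erroneous (histrel (play sigma W n)) (sigma (play sigma W n)) ->
  completable (histrel (play sigma W n.+1)) /\
  forall a b, pref a b -> histrel (play sigma W n.+1) b a ->
    histrel (play sigma W n) b a \/ W b a.
Proof.
move=> HW K nt ok; have U := play_unranked Hs HW nt.
have HR := play_proto Hs HW n; have HC := completion_ranking HR K.
rewrite play_last // histrel_rcons.
set R := histrel _ in K U HR HC ok *; set p := sigma _ in U ok *.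
have Uxy := orient_unranked U.
have Cxy : completion R (orient pref p).1 (orient pref p).2.
  by rewrite /completion Uxy orient_pref ?orbT //; case/and3P: U.
have [K' rev] : completable (add_pair R (winloss W p)) /\
    forall a b, pref a b -> add_pair R (winloss W p) b a ->
      R b a \/ (b = (winloss W p).1 /\ a = (winloss W p).2).
  case: (winloss_orient W p) => ->; apply: completable_add_pair => //.
  - move=> z; apply/negP => /andP [Cyz Czx].
    by move: (ranking_asym HC Cxy); rewrite (ranking_trans HC Cyz Czx).
  - by rewrite unranked_sym.
  - move=> z; apply/negP => /andP [Cxz Czy].
    exact: ok (between_erroneous HR.2 Uxy Cxz Czy).
split=> // a b pab /(rev _ _ pab) [|[-> ->]]; first by left.
by right; apply: winloss_W => //; case/and3P: U.
Qed.

Lemma play_invariant W n : tournament W -> sound_upto W n ->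
  completable (histrel (play sigma W n)) /\ reversals_won W (histrel (play sigma W n)).
Proof.
move=> HW; elim: n => [|n IH] ok; first by split; [exact: completable0 | by []].
have [K rev] := IH (fun k kn => ok k (ltnW kn)).
case: (boolP (terminal (play sigma W n))) => nt; first by rewrite playS nt.
have [K' rev'] := play_step HW K nt (ok n (ltnSn n) nt).
by split=> // a b pab /(rev' _ _ pab) [/(rev _ _ pab)|].
Qed.

Lemma error_improvable W0 n : tournament W0 ->
  completable (histrel (play sigma W0 n)) -> ~~ terminal (play sigma W0 n) ->
  erroneous (histrel (play sigma W0 n)) (sigma (play sigma W0 n)) ->
  exists2 W, tournament W & ~ unimprovable pref W (outcome sigma W).
Proof.
move=> HW0 K nt err; have U := play_unranked Hs HW0 nt.
have HC := completion_ranking (play_proto Hs HW0 n) K.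
set h := play sigma W0 n in K nt err U HC.
have [z /andP [Cxz Czy]] := erroneous_between err.
set C := completion (histrel h) in HC Cxz Czy.
have Uxy := orient_unranked U.
set x := (orient pref (sigma h)).1 in Cxz Uxy.
set y := (orient pref (sigma h)).2 in Czy Uxy.
have d : (sigma h).1 != (sigma h).2 by case/and3P: U.
have Cxy : C x y by rewrite /C /completion Uxy orient_pref ?orbT.
have yx : y != x by rewrite eq_sym (ranking_neq HC Cxy).
pose W := override C y x.
have HW : tournament W := override_tournament (ranking_tournament HC) yx.
have RW a b : histrel h a b -> W a b.
  have Uyx : unranked (histrel h) y x by rewrite unranked_sym.
  move=> Rab; rewrite /W override_off ?(unranked_same_pair Uyx Rab) //.
  exact: completion_base.
have hE : play sigma W n = h := play_eq_upto HW.2 RW (leqnn n).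
have ntW : ~~ terminal (play sigma W n) by rewrite hE.
have RO a b : histrel h a b -> outcome sigma W a b.
  move=> Rab; apply: (play_sub_outcome Hs HW ntW).
  by apply: (play_mono (leqnSn n)); rewrite hE.
have Oyx : outcome sigma W y x.
  apply: (play_sub_outcome Hs HW ntW); rewrite play_last // histrel_rcons hE.
  case: (winloss_orient W (sigma h)) (winloss_W HW d) => -> Wwl.
    by case/negP: (override_lose C yx).
  exact: add_pair_new (histrel h) (y, x).
have feas : feasible W C.
  apply: (feasible_of_covers Hs HW HC) => a b Cab cov.
  case: (boolP (same_pair y x a b)) => [/same_pairP [[Ea Eb]|[Ea Eb]]|off].
  - by move: (ranking_asym HC Cxy); rewrite -Ea -Eb Cab.
  - by move: (cov z); rewrite Ea Eb Cxz Czy.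
  - by rewrite /W override_off.
exists W => // unimp.
have E := unimp C feas HC (completion_more_aligned (outcome_ranking Hs HW) RO).
by move: (ranking_asym (outcome_ranking Hs HW) Oyx); rewrite -E Cxy.
Qed.

Lemma regret_free_sound W n : regret_free pref sigma -> tournament W -> sound_upto W n.
Proof.
move=> rf HW; elim: n => [|n IH] // k.
rewrite ltnS leq_eqVlt => /orP [/eqP -> nt err|/IH //].
have [K _] := play_invariant HW IH.
have [W' HW' nimp] := error_improvable HW K nt err.
exact: nimp (rf W' HW').
Qed.

End Strategy.
End Preference.
End Chair.

Theorem theorem3 (X : finType) (pref : rel X) (sigma : history X -> X * X) :
  ranking pref -> is_strategy sigma ->
  (regret_free pref sigma <-> never_misses pref sigma /\ never_risks pref sigma).
Proof.
move=> Hp Hs; split=> [rf|[nm nr] W HW].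
  have ok h : on_path sigma h -> ~ erroneous pref (histrel h) (sigma h).
    case=> nt [W [HW [n Eh]]]; rewrite -Eh in nt *.
    exact: (regret_free_sound Hp Hs (n := n.+1) rf HW (ltnSn n) nt).
  by split=> h /ok; rewrite /erroneous; tauto.
have ok : sound_upto pref sigma W (#|X| * #|X|).
  move=> k _ nt.
  have onp : on_path sigma (play sigma W k).
    by split=> //; exists W; split=> //; exists k.
  by case; [apply: nm | apply: nr].
apply: (unimprovable_of_reversals_won Hp HW (outcome_ranking Hs HW)).
by case: (play_invariant Hp Hs HW ok).
Qed.
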